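(* Let $(X,d)$ be a sequentially right $K$-complete quasi-pseudometric space and $\varphi:X\to\mathbb{R}\cup\{\infty\}$ a proper, bounded below, lower semicontinuous function. Let $\varepsilon,\lambda>0$ and let $x_0\in X$ satisfy $\varphi(x_0)\le\varepsilon+\inf\varphi(X)$. Put $\gamma=\varepsilon/\lambda$ and, for $x\in X$, $S_\gamma(x)=\{y\in X:\varphi(y)+\gamma d(y,x)\le\varphi(x)\}$. Then there exists $z\in X$ such that (i) $\varphi(z)+\frac{\varepsilon}{\lambda}d(z,x_0)\le\varphi(x_0)$ (so $\varphi(z)\le\varphi(x_0)$); (ii) $d(z,x_0)\le\lambda$; (iii) $\varphi(y)=\varphi(z)$ for all $y\in S_\gamma(z)$; (iv) $\varphi(z)<\varphi(x)+\frac{\varepsilon}{\lambda}d(x,z)$ for all $x\in X\setminus S_\gamma(z)$.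
   Context: A quasi-pseudometric on $X$ is $d:X\times X\to[0,\infty)$ with $d(x,x)=0$ and $d(x,z)\le d(x,y)+d(y,z)$ (no symmetry). Topology $\tau_d$: neighbourhood base at $x$ given by $\{y:d(x,y)<r\}$, $r>0$; $x_n\to x$ iff $d(x,x_n)\to0$. A sequence $(x_n)$ is right $K$-Cauchy if for every $\varepsilon>0$ there is $n_\varepsilon$ with $d(x_{n+k},x_n)<\varepsilon$ for all $n\ge n_\varepsilon$, $k\in\mathbb{N}$; $X$ is sequentially right $K$-complete if every right $K$-Cauchy sequence converges. $\varphi$ is proper if it is finite somewhere; lower semicontinuous if $\varphi(x)\le\liminf_n\varphi(x_n)$ whenever $x_n\to x$. *)

From Stdlib Require Import Reals.
From Coquelicot Require Import Coquelicot.
Open Scope R_scope.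

Definition quasi_pseudometric {X : Type} (d : X -> X -> R) : Prop :=
  (forall x y, 0 <= d x y) /\ (forall x, d x x = 0) /\
  (forall x y z, d x z <= d x y + d y z).

Definition qconv {X : Type} (d : X -> X -> R) (u : nat -> X) (x : X) : Prop :=
  is_lim_seq (fun n => d x (u n)) 0.

Definition right_K_Cauchy {X : Type} (d : X -> X -> R) (u : nat -> X) : Prop :=
  forall eps : R, 0 < eps -> exists N : nat,
    forall n k : nat, (N <= n)%nat -> d (u (n + k)%nat) (u n) < eps.

Definition seq_right_K_complete {X : Type} (d : X -> X -> R) : Prop :=
  forall u : nat -> X, right_K_Cauchy d u -> exists x, qconv d u x.

(* phi : X -> R U {+oo}, encoded as Rbar-valued with -oo excluded *)
Definition no_minus_infty {X : Type} (phi : X -> Rbar) : Prop :=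
  forall x, phi x <> m_infty.

Definition proper_fun {X : Type} (phi : X -> Rbar) : Prop :=
  exists x, is_finite (phi x).

Definition bounded_below {X : Type} (phi : X -> Rbar) : Prop :=
  exists m : R, forall x, Rbar_le m (phi x).

(* sequential lsc: phi x <= liminf phi(x_n) whenever x_n -> x, written out:
   every real r < phi x is eventually exceeded by phi(x_n). *)
Definition seq_lsc {X : Type} (d : X -> X -> R) (phi : X -> Rbar) : Prop :=
  forall (u : nat -> X) (x : X), qconv d u x ->
    forall r : R, Rbar_lt r (phi x) ->
      exists N : nat, forall n, (N <= n)%nat -> Rbar_lt r (phi (u n)).

(* inf phi(X) (in R U {+-oo}); the value +oo is irrelevant for the infimum
   once phi is proper, so we take the glb of the finite values *)
Definition inf_fun {X : Type} (phi : X -> Rbar) : Rbar :=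
  Glb_Rbar (fun r : R => exists x, phi x = Finite r).

Definition S_gamma {X : Type} (d : X -> X -> R) (phi : X -> Rbar)
    (gamma : R) (x : X) (y : X) : Prop :=
  Rbar_le (Rbar_plus (phi y) (Finite (gamma * d y x))) (phi x).

(** Ekeland's principle by successive near-minimisation: starting at [x0],
    choose [x_(n+1)] in [S(x_n)] with [phi(x_(n+1))] within [1/(n+1)] of
    [inf phi(S(x_n))].  The sets [S(x_n)] are nested, so
    [gamma d(x_(n+k), x_(n+1)) <= 1/(n+1)] and the sequence is right
    K-Cauchy; its limit [z] lies in every [S(x_n)] because lower
    semicontinuity makes these sets sequentially closed.  Any [y] in [S(z)]
    then lies in every [S(x_n)], which squeezes [phi y] onto [phi z]; and
    [gamma d(z, x0) <= phi(x0) - phi(z) <= eps] gives [d(z, x0) <= lam]. *)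

From Stdlib Require Import Reals.
From Coquelicot Require Import Coquelicot.
From Stdlib Require Import ClassicalEpsilon Classical Lra Lia.
Open Scope R_scope.

Lemma approx_inf (E : R -> Prop) (m r0 delta : R) :
  (forall r, E r -> m <= r) -> E r0 -> 0 < delta ->
  exists r, E r /\ forall s, E s -> r <= s + delta.
Proof.
  intros Hm Hr0 Hdelta.
  destruct (completeness (fun r => E (- r))) as [l [Hub Hleast]].
  - exists (- m). intros r Hr. specialize (Hm _ Hr). lra.
  - exists (- r0). now rewrite Ropp_involutive.
  - assert (Hnear : exists r, E r /\ l - delta < - r).
    { apply NNPP. intros Hno.
      enough (l <= l - delta) by lra.
      apply Hleast. intros r Hr. apply Rnot_lt_le. intros Hlt.
      apply Hno. exists (- r). now rewrite Ropp_involutive. }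
    destruct Hnear as [r [Hr Hlt]].
    exists r. split; [exact Hr|]. intros s Hs.
    assert (- s <= l) by (apply Hub; now rewrite Ropp_involutive).
    lra.
Qed.

Lemma Rbar_lt_gap (a : R) (b : Rbar) :
  Rbar_lt a b -> exists eta, 0 < eta /\ Rbar_lt (a + eta) b.
Proof.
  destruct b as [b| |]; simpl; intros H.
  - exists ((b - a) / 2). split; lra.
  - exists 1. split; [lra | exact I].
  - contradiction.
Qed.

Lemma le_of_le_plus_inv_S (a b : R) :
  (forall n : nat, a <= b + / INR (S n)) -> a <= b.
Proof.
  intros H. apply Rle_plus_epsilon. intros eps Heps.
  destruct (archimed_cor1 eps Heps) as [[|p] [Hp Hpos]]; [lia|].
  specialize (H p). lra.
Qed.

Lemma inf_fun_le {X : Type} (phi : X -> Rbar) (x : X) :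
  is_finite (phi x) -> Rbar_le (inf_fun phi) (phi x).
Proof.
  intros Hx. rewrite <- Hx. apply (proj1 (Glb_Rbar_correct _)). now exists x.
Qed.

Section Ekeland.

Variables (X : Type) (d : X -> X -> R) (phi : X -> Rbar).
Hypothesis hd : quasi_pseudometric d.
Hypothesis hinf : no_minus_infty phi.
Variable g : R.
Hypothesis hg : 0 < g.

Notation Sg := (S_gamma d phi g).

Lemma d_nonneg x y : 0 <= d x y.
Proof. apply hd. Qed.

Lemma d_refl x : d x x = 0.
Proof. apply hd. Qed.

Lemma d_triangle x y z : d x z <= d x y + d y z.
Proof. apply hd. Qed.

Lemma S_gamma_finite_iff x y : is_finite (phi x) ->
  Sg x y <-> is_finite (phi y) /\ real (phi y) + g * d y x <= real (phi x).
Proof.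
  unfold S_gamma, is_finite. intros Hx.
  destruct (phi x) as [a| |]; simpl in Hx; try discriminate.
  generalize (hinf y). destruct (phi y) as [b| |]; simpl; intros Hy.
  - split; [intros H; split; [reflexivity | lra] | intros [_ H]; lra].
  - split; [tauto | intros [H _]; discriminate].
  - congruence.
Qed.

Lemma S_gamma_finite x y : is_finite (phi x) -> Sg x y -> is_finite (phi y).
Proof. intros Hx Hy. now apply (S_gamma_finite_iff x y Hx) in Hy. Qed.

Lemma S_gamma_refl x : Sg x x.
Proof. unfold S_gamma. rewrite d_refl, Rmult_0_r, Rbar_plus_0_r. apply Rbar_le_refl. Qed.

Lemma S_gamma_trans x y w : Sg x y -> Sg y w -> Sg x w.
Proof.
  intros Hxy Hyw.
  destruct (phi x) as [a| |] eqn:Hx.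
  2: { unfold S_gamma. rewrite Hx. now destruct (Rbar_plus _ _). }
  2: { now destruct (hinf x). }
  assert (Hxf : is_finite (phi x)) by now rewrite Hx.
  apply S_gamma_finite_iff in Hxy as [Hyf Hxy]; [|exact Hxf].
  apply S_gamma_finite_iff in Hyw as [Hwf Hyw]; [|exact Hyf].
  apply S_gamma_finite_iff; [exact Hxf|]. split; [exact Hwf|].
  pose proof (Rmult_le_compat_l g _ _ (Rlt_le _ _ hg) (d_triangle w y x)).
  lra.
Qed.

Hypothesis hlsc : seq_lsc d phi.

Lemma S_gamma_seq_closed x (u : nat -> X) z :
  (forall n, Sg x (u n)) -> qconv d u z -> Sg x z.
Proof.
  intros Hu Hz. apply NNPP. intros Hnot.
  destruct (phi x) as [a| |] eqn:Hx.
  2: { apply Hnot. unfold S_gamma. rewrite Hx. now destruct (Rbar_plus _ _). }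
  2: { now destruct (hinf x). }
  assert (Hxf : is_finite (phi x)) by now rewrite Hx.
  assert (Hgap : Rbar_lt (a - g * d z x) (phi z)).
  { apply Rbar_not_le_lt in Hnot. unfold S_gamma in Hnot. rewrite Hx in Hnot.
    destruct (phi z) as [b| |]; simpl in *; [lra | exact I | contradiction]. }
  destruct (Rbar_lt_gap _ _ Hgap) as [eta [Heta Hlt]].
  destruct (hlsc u z Hz _ Hlt) as [N1 HN1].
  assert (Heta_g : 0 < eta / g) by (apply Rdiv_lt_0_compat; lra).
  destruct (proj2 (is_lim_seq_spec _ _) Hz (mkposreal _ Heta_g)) as [N2 HN2].
  set (n := Nat.max N1 N2).
  specialize (HN1 n ltac:(lia)). specialize (HN2 n ltac:(lia)). simpl in HN2.
  rewrite Rminus_0_r, Rabs_pos_eq in HN2 by apply d_nonneg.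
  destruct (proj1 (S_gamma_finite_iff _ _ Hxf) (Hu n)) as [Hunf Hun].
  rewrite Hx in Hun. rewrite <- Hunf in HN1. simpl in *.
  pose proof (Rmult_le_compat_l g _ _ (Rlt_le _ _ hg) (d_triangle z (u n) x)).
  assert (g * d z (u n) < eta).
  { replace eta with (g * (eta / g)) by (field; lra).
    now apply Rmult_lt_compat_l. }
  lra.
Qed.

Hypothesis hbdd : bounded_below phi.

(** The finiteness hypothesis sits under the existential so that choice
    yields a step function defined on all of [X]. *)
Lemma exists_near_inf_point (n : nat) x : exists y, is_finite (phi x) ->
  Sg x y /\ forall w, Sg x w -> real (phi y) <= real (phi w) + / INR (S n).
Proof.
  destruct (classic (is_finite (phi x))) as [Hx|Hx]; [| exists x; tauto].
  destruct hbdd as [m Hm].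
  destruct (approx_inf (fun r => exists y, Sg x y /\ r = real (phi y))
              m (real (phi x)) (/ INR (S n))) as [r [[y [Hy ->]] Hnear]].
  - intros r [y [Hy ->]]. specialize (Hm y).
    rewrite <- (S_gamma_finite x y Hx Hy) in Hm. exact Hm.
  - exists x. split; [apply S_gamma_refl | reflexivity].
  - apply Rinv_0_lt_compat, lt_0_INR. lia.
  - exists y. intros _. split; [exact Hy|].
    intros w Hw. apply Hnear. now exists w.
Qed.

Definition near_inf_point (n : nat) (x : X) : X :=
  proj1_sig (constructive_indefinite_description _ (exists_near_inf_point n x)).

Lemma near_inf_point_spec n x : is_finite (phi x) ->
  Sg x (near_inf_point n x) /\
  forall w, Sg x w -> real (phi (near_inf_point n x)) <= real (phi w) + / INR (S n).
Proof. exact (proj2_sig (constructive_indefinite_description _ (exists_near_inf_point n x))). Qed.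

Fixpoint descent_seq (x0 : X) (n : nat) : X :=
  match n with
  | O => x0
  | S k => near_inf_point k (descent_seq x0 k)
  end.

Variable x0 : X.
Hypothesis hx0 : is_finite (phi x0).

Notation u := (descent_seq x0).

Lemma descent_seq_finite n : is_finite (phi (u n)).
Proof.
  induction n as [|n IH]; [exact hx0|].
  exact (S_gamma_finite _ _ IH (proj1 (near_inf_point_spec n _ IH))).
Qed.

Lemma descent_seq_succ n :
  Sg (u n) (u (S n)) /\
  forall w, Sg (u n) w -> real (phi (u (S n))) <= real (phi w) + / INR (S n).
Proof. apply near_inf_point_spec, descent_seq_finite. Qed.

Lemma descent_seq_nested n k : Sg (u n) (u (n + k)).
Proof.
  induction k as [|k IH].
  - rewrite Nat.add_0_r. apply S_gamma_refl.
  - rewrite Nat.add_succ_r. exact (S_gamma_trans _ _ _ IH (proj1 (descent_seq_succ _))).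
Qed.

Lemma descent_seq_tail_bound p k :
  g * d (u (S p + k)) (u (S p)) <= / INR (S p).
Proof.
  pose proof (proj2 (descent_seq_succ p) (u (S p + k))) as Hnear.
  replace (S p + k)%nat with (p + S k)%nat in Hnear at 1 by lia.
  specialize (Hnear (descent_seq_nested p (S k))).
  pose proof (proj1 (S_gamma_finite_iff _ _ (descent_seq_finite (S p)))
                (descent_seq_nested (S p) k)) as [_ Hdesc].
  lra.
Qed.

Lemma descent_seq_right_K_Cauchy : right_K_Cauchy d u.
Proof.
  intros e He.
  assert (Hge : 0 < g * e) by (apply Rmult_lt_0_compat; lra).
  destruct (archimed_cor1 _ Hge) as [N [HN HNpos]].
  exists N. intros [|p] k Hp; [lia|].
  apply (Rmult_lt_reg_l g); [exact hg|].
  apply (Rle_lt_trans _ _ _ (descent_seq_tail_bound p k)).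
  apply (Rle_lt_trans _ (/ INR N)); [|exact HN].
  apply Rinv_le_contravar; [apply lt_0_INR; lia | apply le_INR; lia].
Qed.

Section Limit.

Variable z : X.
Hypothesis hz : qconv d u z.

Lemma descent_limit_in_S n : Sg (u n) z.
Proof.
  apply (S_gamma_seq_closed _ (fun k => u (n + k)%nat)).
  - apply descent_seq_nested.
  - unfold qconv. apply (is_lim_seq_incr_n _ n) in hz.
    eapply is_lim_seq_ext; [|exact hz]. intros k. simpl. now rewrite Nat.add_comm.
Qed.

Lemma descent_limit_finite : is_finite (phi z).
Proof. exact (S_gamma_finite _ _ (descent_seq_finite 0) (descent_limit_in_S 0)). Qed.

Lemma descent_limit_S_stable y : Sg z y -> phi y = phi z.
Proof.
  intros Hy.
  pose proof descent_limit_finite as Hzf.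
  apply S_gamma_finite_iff in Hy as [Hyf Hy]; [|exact Hzf].
  assert (Hge : real (phi z) <= real (phi y)).
  { apply le_of_le_plus_inv_S. intros n.
    pose proof (proj2 (descent_seq_succ n) y
                  (S_gamma_trans _ _ _ (descent_limit_in_S n)
                     (proj2 (S_gamma_finite_iff _ _ Hzf) (conj Hyf Hy)))).
    pose proof (proj1 (S_gamma_finite_iff _ _ (descent_seq_finite (S n)))
                  (descent_limit_in_S (S n))) as [_ Hz].
    pose proof (Rmult_le_pos _ _ (Rlt_le _ _ hg) (d_nonneg z (u (S n)))).
    lra. }
  pose proof (Rmult_le_pos _ _ (Rlt_le _ _ hg) (d_nonneg y z)).
  rewrite <- Hyf, <- Hzf. f_equal. lra.
Qed.

End Limit.

Hypothesis hcompl : seq_right_K_complete d.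

Lemma exists_S_stable_point : exists z, Sg x0 z /\ is_finite (phi z) /\
  forall y, Sg z y -> phi y = phi z.
Proof.
  destruct (hcompl _ descent_seq_right_K_Cauchy) as [z hz].
  exists z. split; [|split].
  - exact (descent_limit_in_S z hz 0).
  - exact (descent_limit_finite z hz).
  - exact (descent_limit_S_stable z hz).
Qed.

End Ekeland.

Lemma finite_of_le_eps_plus_inf {X : Type} (phi : X -> Rbar) (eps : R) x :
  no_minus_infty phi -> proper_fun phi ->
  Rbar_le (phi x) (Rbar_plus eps (inf_fun phi)) -> is_finite (phi x).
Proof.
  intros hinf [p Hp] Hx.
  pose proof (inf_fun_le phi p Hp) as Hi. pose proof (hinf x) as Hx'.
  unfold is_finite in *. revert Hx Hi Hx'. rewrite <- Hp.
  destruct (inf_fun phi), (phi x); simpl; tauto.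
Qed.

Lemma S_gamma_dist_le {X : Type} (d : X -> X -> R) (phi : X -> Rbar) (g eps : R) x y :
  is_finite (phi x) -> is_finite (phi y) -> S_gamma d phi g x y ->
  Rbar_le (phi x) (Rbar_plus eps (inf_fun phi)) -> g * d y x <= eps.
Proof.
  intros Hxf Hyf Hy Hx. pose proof (inf_fun_le phi y Hyf) as Hi.
  unfold S_gamma, is_finite in *. revert Hx Hy Hi. rewrite <- Hxf, <- Hyf.
  destruct (inf_fun phi); simpl; intros; [lra | contradiction | contradiction].
Qed.

Theorem theorem3p4 (X : Type) (d : X -> X -> R) (phi : X -> Rbar)
  (hd : quasi_pseudometric d) (hcompl : seq_right_K_complete d)
  (hinf : no_minus_infty phi) (hprop : proper_fun phi)
  (hbdd : bounded_below phi) (hlsc : seq_lsc d phi)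
  (eps lam : R) (heps : 0 < eps) (hlam : 0 < lam) (x0 : X)
  (hx0 : Rbar_le (phi x0) (Rbar_plus (Finite eps) (inf_fun phi))) :
  exists z : X,
    Rbar_le (Rbar_plus (phi z) (Finite (eps / lam * d z x0))) (phi x0) /\
    d z x0 <= lam /\
    (forall y, S_gamma d phi (eps / lam) z y -> phi y = phi z) /\
    (forall x, ~ S_gamma d phi (eps / lam) z x ->
       Rbar_lt (phi z) (Rbar_plus (phi x) (Finite (eps / lam * d x z)))).
Proof.
  assert (hg : 0 < eps / lam) by (apply Rdiv_lt_0_compat; lra).
  pose proof (finite_of_le_eps_plus_inf phi eps x0 hinf hprop hx0) as hx0f.
  destruct (exists_S_stable_point X d phi hd hinf _ hg hlsc hbdd x0 hx0f hcompl)
    as [z [hz0 [hzf hstable]]].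
  exists z. split; [exact hz0|]. split; [|split].
  - apply (Rmult_le_reg_l (eps / lam)); [exact hg|].
    replace (eps / lam * lam) with eps by (field; lra).
    exact (S_gamma_dist_le d phi _ eps x0 z hx0f hzf hz0 hx0).
  - exact hstable.
  - intros x Hx. exact (Rbar_not_le_lt _ _ Hx).
Qed.
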